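(* In the setting of the one-step SNA update below, assume (A1) $T\nu\le\frac14$ and work on the event $\mathcal E=\{\|X^\top\eta\|_\infty/n\le\lambda_u\}$. Let $\kappa=8/5$ and $\tau\in\{\kappa,\kappa+1\}$, and for $\lambda>0$ let $S_{\lambda,\tau}=\{i:|\beta^\dagger_i|\ge\lambda\tau\}$. Let $\bar\lambda=\frac{9}{10}\lambda+\delta_u<\lambda$. Given $(\beta^k,d^k)$ with $A^k=\{i:|\beta^k_i+d^k_i|>\lambda\}$, compute $(\beta^{k+1},d^{k+1})$ by one SNA step and set $A^{k+1}=\{i:|\beta^{k+1}_i+d^{k+1}_i|>\lambda\}$. Let $E^k=A^\dagger\setminus A^k$ and $i_k\in\arg\max_{i\in E^k}|\beta^\dagger_i|$ (similarly $i_{k+1}$ for $E^{k+1}$, with value $0$ if the set is empty). Then: (i) if $S_{\lambda,\tau}\subseteq A^k\subseteq A^\dagger$, then $S_{\lambda,\tau}\subseteq A^{k+1}\subseteq A^\dagger$; (ii) if $S_{\lambda,\kappa+1}\subseteq A^k\subseteq A^\dagger$ and $S_{\lambda,\kappa}\not\subseteq A^k$, then $|\beta^\dagger_{i_k}|>|\beta^\dagger_{i_{k+1}}|$.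
   Context: Model $y=X\beta^\dagger+\eta$, $X\in\mathbb{R}^{n\times p}$ with $\|X_j\|_2^2=n$; $A^\dagger=\operatorname{supp}(\beta^\dagger)$, $T=|A^\dagger|$; $\nu=\max_{i\ne j}|(X^\top X)_{ij}|/n$; $\lambda_u=\sigma\sqrt{2\log(p)/n}$, $\delta_u=3\lambda_u$. One SNA step (with $\alpha=0$) from $(\beta^k,d^k)$: with $B^k=(A^k)^c$, $\beta^{k+1}_{B^k}=0$, $d^{k+1}_{A^k}=(\lambda-\bar\lambda)\operatorname{sgn}(\beta^k_{A^k}+d^k_{A^k})$, $\beta^{k+1}_{A^k}=(X_{A^k}^\top X_{A^k})^{-1}(X_{A^k}^\top y-nd^{k+1}_{A^k})$, $d^{k+1}_{B^k}=X_{B^k}^\top(y-X_{A^k}\beta^{k+1}_{A^k})/n$. *)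

From HB Require Import structures.
From Stdlib Require Import Reals Lra ClassicalEpsilon FunctionalExtensionality.
From mathcomp Require Import all_boot all_order all_algebra.
Set Implicit Arguments. Unset Strict Implicit. Unset Printing Implicit Defensive.
Import Order.TTheory GRing.Theory Num.Theory.

Definition Reqb (x y : R) : bool := if Req_EM_T x y then true else false.
Lemma Reqb_axiom : Equality.axiom Reqb.
Proof. by move=> x y; rewrite /Reqb; case: Req_EM_T => h; constructor. Qed.
HB.instance Definition _ := hasDecEq.Build R Reqb_axiom.

Definition Rfind (P : pred R) (n : nat) : option R :=
  if excluded_middle_informative (exists x, P x)
  then Some (epsilon (inhabits R0) (fun x => P x)) else None.
Lemma Rfind_correct P n x : Rfind P n = Some x -> P x.
Proof.
rewrite /Rfind; case: excluded_middle_informative => // h [<-].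
exact: (epsilon_spec (inhabits R0) (fun x => P x) h).
Qed.
Lemma Rfind_complete (P : pred R) : (exists x, P x) -> exists n, Rfind P n.
Proof. by move=> h; exists 0%N; rewrite /Rfind; case: excluded_middle_informative. Qed.
Lemma Rfind_ext (P Q : pred R) : P =1 Q -> Rfind P =1 Rfind Q.
Proof. by move=> h; have -> : P = Q by apply: functional_extensionality. Qed.
HB.instance Definition _ := hasChoice.Build R Rfind_correct Rfind_complete Rfind_ext.

Lemma R_addA : associative Rplus. Proof. by move=> *; rewrite Rplus_assoc. Qed.
Lemma R_addC : commutative Rplus. Proof. exact: Rplus_comm. Qed.
Lemma R_add0 : left_id R0 Rplus. Proof. exact: Rplus_0_l. Qed.
Lemma R_addN : left_inverse R0 Ropp Rplus. Proof. exact: Rplus_opp_l. Qed.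
HB.instance Definition _ := GRing.isZmodule.Build R R_addA R_addC R_add0 R_addN.

Lemma R_mulA : associative Rmult. Proof. by move=> *; rewrite Rmult_assoc. Qed.
Lemma R_mulC : commutative Rmult. Proof. exact: Rmult_comm. Qed.
Lemma R_mul1 : left_id R1 Rmult. Proof. exact: Rmult_1_l. Qed.
Lemma R_mulDl : left_distributive Rmult Rplus. Proof. exact: Rmult_plus_distr_r. Qed.
Lemma R_one_neq0 : R1 != R0. Proof. by apply/eqP; exact: R1_neq_R0. Qed.
HB.instance Definition _ := GRing.Zmodule_isComNzRing.Build R R_mulA R_mulC R_mul1 R_mulDl R_one_neq0.

Local Open Scope ring_scope.
Definition Rinvx (x : R) : R := if x == R0 then R0 else Rinv x.
Lemma R_mulVf (x : R) : x != 0 -> Rinvx x * x = 1.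
Proof. move=> /negbTE h; rewrite /Rinvx h. apply: Rinv_l. by move/eqP; rewrite h. Qed.
Lemma R_inv0 : Rinvx 0 = 0. Proof. by rewrite /Rinvx eqxx. Qed.
HB.instance Definition _ := GRing.ComNzRing_isField.Build R R_mulVf R_inv0.

Definition Rleb (x y : R) : bool := if Rle_dec x y then true else false.
Definition Rltb (x y : R) : bool := if Rlt_dec x y then true else false.
Lemma RlebP x y : reflect (Rle x y) (Rleb x y).
Proof. by rewrite /Rleb; case: Rle_dec => h; constructor. Qed.
Lemma RltbP x y : reflect (Rlt x y) (Rltb x y).
Proof. by rewrite /Rltb; case: Rlt_dec => h; constructor. Qed.

Lemma R_le0_add (x y : R) : Rleb 0 x -> Rleb 0 y -> Rleb 0 (x + y).
Proof. move=> /RlebP h1 /RlebP h2; apply/RlebP; change (Rle R0 (Rplus x y)); change (Rle R0 x) in h1; change (Rle R0 y) in h2; lra. Qed.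
Lemma R_le0_mul (x y : R) : Rleb 0 x -> Rleb 0 y -> Rleb 0 (x * y).
Proof. move=> /RlebP h1 /RlebP h2; apply/RlebP; exact: Rmult_le_pos. Qed.
Lemma R_le0_anti (x : R) : Rleb 0 x -> Rleb x 0 -> x = 0.
Proof. move=> /RlebP h1 /RlebP h2; change (x = R0); change (Rle R0 x) in h1; change (Rle x R0) in h2; lra. Qed.
Lemma R_sub_ge0 (x y : R) : Rleb 0 (y - x) = Rleb x y.
Proof.
apply/idP/idP => /RlebP h; apply/RlebP;
 [change (Rle R0 (Rplus y (Ropp x))) in h | change (Rle R0 (Rplus y (Ropp x)))]; lra.
Qed.
Lemma R_le0_total (x : R) : Rleb 0 x || Rleb x 0.
Proof. case: (Rle_dec 0 x) => h; [by apply/orP; left; apply/RlebP|]. apply/orP; right; apply/RlebP; change (Rle x R0); change (~ Rle R0 x) in h; lra. Qed.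
Lemma R_normN (x : R) : Rabs (- x) = Rabs x.
Proof. exact: Rabs_Ropp. Qed.
Lemma R_ge0_norm (x : R) : Rleb 0 x -> Rabs x = x.
Proof. by move=> /RlebP h; apply: Rabs_right; change (Rle R0 x) in h; lra. Qed.
Lemma R_lt_def (x y : R) : Rltb x y = (y != x) && Rleb x y.
Proof.
apply/idP/andP.
- move=> /RltbP h; split; [apply/eqP => e; subst; lra | apply/RlebP; lra].
- case=> /eqP h /RlebP h2; apply/RltbP; lra.
Qed.
HB.instance Definition _ := Num.IntegralDomain_isLeReal.Build R R_le0_add R_le0_mul R_le0_anti R_sub_ge0 R_le0_total R_normN R_ge0_norm R_lt_def.


Global Open Scope ring_scope.
Bind Scope ring_scope with Rdefinitions.RbaseSymbolsImpl.R.
Notation R := Rdefinitions.RbaseSymbolsImpl.R (only parsing).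

Definition supp {p : nat} (b : 'cV[R]_p) : {set 'I_p} := [set i | b i 0 != 0].

Definition nu {n p : nat} (X : 'M[R]_(n, p)) : R :=
  \big[Num.max/0]_(ij : 'I_p * 'I_p | ij.1 != ij.2) (`|(X^T *m X) ij.1 ij.2| / n%:R).

Definition lam_u (sigma : R) (n p : nat) : R := sigma * sqrt (2 * ln p%:R / n%:R).
Definition delta_u (sigma : R) (n p : nat) : R := 3 * lam_u sigma n p.

Definition lam_bar (lam sigma : R) (n p : nat) : R := 9 / 10 * lam + delta_u sigma n p.

Definition kappa : R := 8 / 5.

Definition active {p : nat} (lam : R) (b d : 'cV[R]_p) : {set 'I_p} :=
  [set i | lam < `|b i 0 + d i 0|].

Definition S_set {p : nat} (bdag : 'cV[R]_p) (lam tau : R) : {set 'I_p} :=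
  [set i | lam * tau <= `|bdag i 0|].

(* |beta^dagger_{i_E}| for i_E in argmax_{i in E} |beta^dagger_i|, and 0 if E is empty *)
Definition maxabs {p : nat} (bdag : 'cV[R]_p) (E : {set 'I_p}) : R :=
  \big[Num.max/0]_(i in E) `|bdag i 0|.

(* X_A : the columns of X indexed by A (in increasing order) *)
Definition colA {n p : nat} (X : 'M[R]_(n, p)) (A : {set 'I_p}) : 'M[R]_(n, #|A|) :=
  colsub (fun k : 'I_#|A| => enum_val k) X.

(* v_A : the entries of v indexed by A (same order) *)
Definition vecA {p : nat} (A : {set 'I_p}) (v : 'cV[R]_p) : 'cV[R]_#|A| :=
  rowsub (fun k : 'I_#|A| => enum_val k) v.

(* One SNA step (alpha = 0) from (b0, d0) to (b1, d1), with A = A^k, B = A^c. *)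
Definition sna_step {n p : nat} (X : 'M[R]_(n, p)) (y : 'cV[R]_n) (lam lamb : R)
    (b0 d0 b1 d1 : 'cV[R]_p) : Prop :=
  let A := active lam b0 d0 in
  let XA := colA X A in
  [/\ forall i, i \notin A -> b1 i 0 = 0,
      forall i, i \in A -> d1 i 0 = (lam - lamb) * Num.sg (b0 i 0 + d0 i 0),
      vecA A b1 = invmx (XA^T *m XA) *m (XA^T *m y - n%:R *: vecA A d1)
    & forall i, i \notin A -> d1 i 0 = (X^T *m (y - XA *m vecA A b1)) i 0 / n%:R].

From mathcomp Require Import all_boot all_order all_algebra.
From mathcomp Require Import lra ring.
Import Order.TTheory GRing.Theory Num.Theory.

(* Write C = X^T X, g = X^T eta, A = A^k, E = supp(beta^dagger) \ A, a = |A|,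
   e = |E|, M = max_{i in E} |beta^dagger_i|, c = lambda - bar-lambda and
   r = beta^dagger - beta^{k+1}.  Normalised columns give C_ii = n and
   |C_ij| <= n nu for i <> j, so C restricted to A is diagonally dominant as soon
   as a nu < 1.  This makes X_A^T X_A invertible, so the step satisfies the
   normal equation  n d^{k+1} = C r + g  on all coordinates.  Reading it on A
   (a diagonally dominant system for r - d^{k+1}, with |d^{k+1}| = c on A) and
   then off A gives the uniform error bound
       (1 - a nu) |beta^{k+1}_j + d^{k+1}_j - beta^dagger_j| <= lambda_u + e nu M + a nu c.
   Under (A1) we have (a + e) nu <= 1/4, and bar-lambda < lambda forces
   lambda_u < lambda / 30; the bound then shows that no zero coefficient enters
   A^{k+1} while M <= 13/5 lambda, and that every coefficient with
   |beta^dagger_j| >= max(M, 8/5 lambda) enters A^{k+1}. *)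

Section DiagonalDominance.
Context {F : realFieldType}.

Lemma norm_sum_weighted_le {I : finType} {P : pred I} {w v : I -> F} (c : F) :
  (forall j, P j -> `|w j| <= c) ->
  `|\sum_(j | P j) w j * v j| <= c * \sum_(j | P j) `|v j|.
Proof.
move=> hw; apply: le_trans (ler_norm_sum _ _ _) _.
rewrite mulr_sumr; apply: ler_sum => j Pj.
by rewrite normrM; apply: ler_wpM2r => //; exact: hw.
Qed.

Lemma sum_restrict_le {I : finType} (P Q : pred I) (f : I -> F) :
  (forall i, P i -> 0 <= f i) -> \sum_(i | P i && Q i) f i <= \sum_(i | P i) f i.
Proof.
move=> hf; rewrite big_mkcondr /=; apply: ler_sum => i Pi.
by case: (Q i) => //; exact: hf.
Qed.

Context {I : finType} {A : {set I}} {G : I -> I -> F} {D c : F}.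
Hypotheses (D_gt0 : 0 < D) (c_ge0 : 0 <= c).
Hypothesis G_diag : forall i, i \in A -> G i i = D.
Hypothesis G_off : forall i j, i != j -> `|G i j| <= c.

Lemma diag_row_bound (v : I -> F) {i} : i \in A ->
  D * `|v i| <= `|\sum_(j in A) G i j * v j| + c * \sum_(j in A) `|v j|.
Proof.
move=> iA; rewrite (bigD1 i iA) /= G_diag //.
have hrow := lerB_normD (D * v i) (\sum_(j in A | j != i) G i j * v j).
have hoff : `|\sum_(j in A | j != i) G i j * v j|
            <= c * \sum_(j in A | j != i) `|v j|.
  by apply: norm_sum_weighted_le => j /andP [_ ji]; apply: G_off; rewrite eq_sym.
have hdrop : c * \sum_(j in A | j != i) `|v j| <= c * \sum_(j in A) `|v j|.
  by apply: ler_wpM2l => //; exact: sum_restrict_le.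
rewrite normrM (gtr0_norm D_gt0) in hrow; lra.
Qed.

Lemma diag_dominant_bound (v : I -> F) (W : F) : 0 <= D - #|A|%:R * c ->
  (forall i, i \in A -> `|\sum_(j in A) G i j * v j| <= W) ->
  forall i, i \in A -> `|v i| * (D - #|A|%:R * c) <= W.
Proof.
move=> hK hW i0 i0A.
have W_ge0 : 0 <= W by apply: le_trans (hW _ i0A).
pose V := \big[Num.max/0]_(j in A) `|v j|.
have V_ge0 : 0 <= V by exact: bigmax_ge_id.
have hVi : forall i, i \in A -> `|v i| <= V by move=> i iA; exact: le_bigmax_cond.
have hsum : \sum_(j in A) `|v j| <= #|A|%:R * V.
  by rewrite mulr_natl -sumr_const; apply: ler_sum.
have hDV : D * V <= W + c * (#|A|%:R * V).
  suff : V <= (W + c * (#|A|%:R * V)) / D by rewrite ler_pdivlMr // mulrC.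
  apply: bigmax_le => [|i iA].
    by apply: divr_ge0 (ltW D_gt0); apply: addr_ge0 => //; rewrite !mulr_ge0.
  rewrite ler_pdivlMr // [_ * D]mulrC; apply: le_trans (diag_row_bound v iA) _.
  by apply: lerD (hW i iA) _; exact: ler_wpM2l.
have : `|v i0| * (D - #|A|%:R * c) <= V * (D - #|A|%:R * c).
  by apply: ler_wpM2r => //; exact: hVi.
lra.
Qed.

End DiagonalDominance.

Section ColumnExtraction.
Variables (n p : nat) (X : 'M[R]_(n, p)) (A : {set 'I_p}).

Lemma colA_entry r l : colA X A r l = X r (enum_val l).
Proof. by rewrite /colA mxE. Qed.

Lemma vecA_entry (v : 'cV[R]_p) l : vecA A v l 0 = v (enum_val l) 0.
Proof. by rewrite /vecA mxE. Qed.

Lemma sum_enum_val (f : 'I_p -> R) :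
  (forall j, j \notin A -> f j = 0) -> \sum_(k < #|A|) f (enum_val k) = \sum_j f j.
Proof.
move=> hf; rewrite -big_enum_val big_mkcond /=; apply: eq_bigr => j _.
by case: ifP => // /negbT /hf ->.
Qed.

Lemma colA_mulmx (v : 'cV[R]_p) :
  (forall j, j \notin A -> v j 0 = 0) -> colA X A *m vecA A v = X *m v.
Proof.
move=> hv; apply/matrixP => r z; rewrite (ord1 z) !mxE.
under eq_bigr do rewrite colA_entry vecA_entry.
by apply: sum_enum_val => j /hv ->; rewrite mulr0.
Qed.

Lemma colA_tr_mulmx (u : 'cV[R]_n) k :
  ((colA X A)^T *m u) k 0 = (X^T *m u) (enum_val k) 0.
Proof. by rewrite !mxE; apply: eq_bigr => r _; rewrite !mxE. Qed.

Lemma gram_colA k l :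
  ((colA X A)^T *m colA X A) k l = (X^T *m X) (enum_val k) (enum_val l).
Proof. by rewrite !mxE; apply: eq_bigr => r _; rewrite !mxE. Qed.

End ColumnExtraction.

Lemma gram_diag {n p : nat} (X : 'M[R]_(n, p)) j :
  (X^T *m X) j j = \sum_(i < n) X i j ^+ 2.
Proof. by rewrite mxE; apply: eq_bigr => i _; rewrite mxE expr2. Qed.

(* With normalised columns and a |A| nu < 1, the Gram matrix X_A^T X_A is
   diagonally dominant, hence invertible. *)
Lemma gram_colA_unit n p (X : 'M[R]_(n, p)) (A : {set 'I_p}) (nv : R) :
  (0 < n)%N -> (forall j : 'I_p, \sum_(i < n) X i j ^+ 2 = n%:R) ->
  (forall i j, i != j -> `|(X^T *m X) i j| <= n%:R * nv) -> 0 <= nv ->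
  #|A|%:R * nv < 1 -> (colA X A)^T *m colA X A \in unitmx.
Proof.
move=> n_gt0 hcol hoff nv_ge0 hA.
have hN : 0 < n%:R :> R by rewrite ltr0n.
have hK : 0 < n%:R - #|A|%:R * (n%:R * nv).
  by rewrite mulrCA -[X in X - _]mulr1 -mulrBr mulr_gt0 // subr_gt0.
rewrite -row_free_unit; apply: inj_row_free => u hu; apply/rowP => l.
set Gr := (colA X A)^T *m colA X A.
have hbound := @diag_dominant_bound _ _ [set: 'I_#|A|] (fun k l => Gr l k)
  n%:R (n%:R * nv) hN (mulr_ge0 (ltW hN) nv_ge0) _ _ (fun k => u 0 k) 0.
rewrite cardsT card_ord in hbound.
have : `|u 0 l| * (n%:R - #|A|%:R * (n%:R * nv)) <= 0.
  apply: hbound (ltW hK) _ l (in_setT l) => [i _|i j ij|i _].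
  - by rewrite /Gr gram_colA gram_diag hcol.
  - rewrite /Gr gram_colA; apply: hoff.
    by apply: contra ij => /eqP /enum_val_inj ->.
  - have := congr1 (fun M : 'rV[R]_#|A| => M 0 i) hu; rewrite !mxE => hi.
    under eq_bigl do rewrite in_setT.
    by under eq_bigr do rewrite mulrC; rewrite hi normr0.
by rewrite pmulr_lle0 // normr_le0 mxE => /eqP.
Qed.

(* When X_A^T X_A is invertible, one SNA step satisfies the normal equation
   n d1 = X^T y - X^T X b1 on every coordinate (on A by construction of b1,
   off A by construction of d1). *)
Lemma sna_normal_eq {n p : nat} {X : 'M[R]_(n, p)} {y : 'cV[R]_n} {lam lamb : R}
    {b0 d0 b1 d1 : 'cV[R]_p} :
  (0 < n)%N ->
  (colA X (active lam b0 d0))^T *m colA X (active lam b0 d0) \in unitmx ->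
  sna_step X y lam lamb b0 d0 b1 d1 ->
  n%:R *: d1 = X^T *m y - (X^T *m X) *m b1.
Proof.
move=> n_gt0; set A := active lam b0 d0; set Gr := _ *m _ => hU [b1_off _ b1_on d1_off].
have hN : n%:R != 0 :> R by rewrite pnatr_eq0 -lt0n.
apply/matrixP => i z; rewrite (ord1 z) {z} !mxE.
case: (boolP (i \in A)) => iA; last first.
  by rewrite d1_off // colA_mulmx // mulmxBr mulmxA mulrC divfK // !mxE.
have hsys := congr1 (mulmx Gr) b1_on; rewrite mulKVmx // in hsys.
pose k := enum_rank_in iA i.
have ek : enum_val k = i by rewrite enum_rankK_in.
have lhs : (Gr *m vecA A b1) k 0 = ((X^T *m X) *m b1) i 0.
  rewrite mxE [RHS]mxE; under eq_bigr do rewrite gram_colA vecA_entry ek.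
  by apply: (@sum_enum_val _ A (fun j => (X^T *m X) i j * b1 j 0)) => j /b1_off ->;
    rewrite mulr0.
have rhs : ((colA X A)^T *m y - n%:R *: vecA A d1) k 0
           = (X^T *m y) i 0 - n%:R * d1 i 0.
  by rewrite mxE colA_tr_mulmx ek; congr (_ + _); rewrite !mxE ek.
rewrite -hsys lhs !mxE in rhs; lra.
Qed.

Lemma nu_ge0 {n p : nat} (X : 'M[R]_(n, p)) : 0 <= nu X.
Proof. exact: bigmax_ge_id. Qed.

Lemma nu_offdiag {n p : nat} (X : 'M[R]_(n, p)) : (0 < n)%N ->
  forall i j, i != j -> `|(X^T *m X) i j| <= n%:R * nu X.
Proof.
move=> n_gt0 i j ij; rewrite -ler_pdivrMl ?ltr0n // mulrC.
exact: (le_bigmax_cond _ (fun ij : 'I_p * 'I_p => `|(X^T *m X) ij.1 ij.2| / n%:R)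
  (j := (i, j)) (P := fun ij : 'I_p * 'I_p => ij.1 != ij.2)).
Qed.

Lemma lam_u_ge0 {sigma : R} (n p : nat) : 0 <= sigma -> 0 <= lam_u sigma n p.
Proof. by move=> hs; apply: mulr_ge0 => //; apply/RlebP; exact: R_sqrt.sqrt_pos. Qed.

Section OneStep.
Context {n p : nat} {X : 'M[R]_(n, p)} {bdag : 'cV[R]_p} {eta y : 'cV[R]_n}.
Context {nv lu lam lamb : R} {b0 d0 b1 d1 : 'cV[R]_p}.
Hypothesis n_gt0 : (0 < n)%N.
Hypothesis col_norm : forall j : 'I_p, \sum_(i < n) X i j ^+ 2 = n%:R.
Hypothesis model : y = X *m bdag + eta.
Hypothesis gram_off : forall i j, i != j -> `|(X^T *m X) i j| <= n%:R * nv.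
Hypothesis nv_ge0 : 0 <= nv.
Hypothesis sparse : #|supp bdag|%:R * nv <= 1 / 4.
Hypothesis noise : forall j, `|(X^T *m eta) j 0| <= n%:R * lu.
Hypothesis lu_ge0 : 0 <= lu.
Hypothesis lam_gt0 : 0 < lam.
Hypothesis lamb_def : lamb = 9 / 10 * lam + 3 * lu.
Hypothesis lamb_lt : lamb < lam.
Hypothesis step : sna_step X y lam lamb b0 d0 b1 d1.
Hypothesis A_in_supp : active lam b0 d0 \subset supp bdag.

Local Notation A := (active lam b0 d0).
Local Notation Sdag := (supp bdag).
Local Notation E := (Sdag :\: A).
Local Notation Mx := (maxabs bdag E).
Local Notation Gram := (X^T *m X).
Local Notation gnoise := (X^T *m eta).
Local Notation res j := (bdag j 0 - b1 j 0).
Local Notation cgap := (lam - lamb).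
Local Notation nA := (#|A|%:R : R).
Local Notation nE := (#|E|%:R : R).
Local Notation Werr := (lu + nE * nv * Mx + nA * nv * cgap).

Lemma budget_split : nA * nv + nE * nv <= 1 / 4.
Proof. by rewrite -mulrDl -natrD -{1}(setIidPr A_in_supp) cardsID. Qed.

(* In particular |A| nu < 1, the diagonal-dominance margin on A. *)
Lemma detected_budget : 0 < 1 - nA * nv.
Proof.
have := budget_split; have : 0 <= nE * nv by rewrite mulr_ge0.
lra.
Qed.

Lemma residual_eq i : n%:R * d1 i 0 = \sum_j Gram i j * res j + gnoise i 0.
Proof.
have hU : (colA X A)^T *m colA X A \in unitmx.
  by apply: (@gram_colA_unit n p X A nv) => //; have := detected_budget; lra.
have := congr1 (fun M : 'cV[R]_p => M i 0) (sna_normal_eq n_gt0 hU step).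
rewrite model mulmxDr mulmxA addrAC -mulmxBr !mxE => ->.
by congr (_ + _); apply: eq_bigr => j _; rewrite !mxE.
Qed.

Lemma dual_active {i} : i \in A -> `|d1 i 0| = cgap.
Proof.
case: step => _ d1_on _ _ iA; rewrite d1_on // normrM normr_sg ger0_norm.
  suff -> : b0 i 0 + d0 i 0 != 0 by rewrite mulr1.
  by move: iA; rewrite inE; apply: contraTneq => ->; rewrite normr0 -leNgt ltW.
by have := lamb_lt; lra.
Qed.

Lemma res_inactive {j} : j \notin A -> res j = bdag j 0.
Proof. by case: step => b1_off _ _ _ /b1_off ->; rewrite subr0. Qed.

(* Off A the residual is the missed signal, of l1 norm at most |E| M. *)
Lemma res_tail_le : \sum_(j | j \notin A) `|res j| <= nE * Mx.
Proof.
apply: (@le_trans _ _ (\sum_(j | j \notin A) (if j \in Sdag then Mx else 0))).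
  apply: ler_sum => j jA; rewrite res_inactive //; case: ifPn => jS.
    by apply: le_bigmax_cond; rewrite inE jS jA.
  by move: jS; rewrite inE negbK => /eqP ->; rewrite normr0.
rewrite -big_mkcondr /= (eq_bigl (mem E)) ?sumr_const ?mulr_natl // => j.
by rewrite /= in_setD andbC.
Qed.

Lemma offdiag_row_le {i} {Q : pred 'I_p} {v : 'I_p -> R} :
  (forall l, Q l -> l != i) ->
  `|\sum_(l | Q l) Gram i l * v l| <= n%:R * nv * \sum_(l | Q l) `|v l|.
Proof.
by move=> hQ; apply: norm_sum_weighted_le => l /hQ li; apply: gram_off; rewrite eq_sym.
Qed.

(* Restricted to A, the normal equation is a diagonally dominant system for
   res - d1 whose right-hand side has size at most n * Werr. *)
Lemma active_system_le {i} : i \in A ->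
  `|\sum_(j in A) Gram i j * (res j - d1 j 0)| <= n%:R * Werr.
Proof.
move=> iA; have hN : 0 <= n%:R :> R by rewrite ler0n.
have hres := residual_eq i.
rewrite (bigID (mem A)) /= in hres.
have hd1 : \sum_(j in A) Gram i j * d1 j 0 =
    n%:R * d1 i 0 + \sum_(j in A | j != i) Gram i j * d1 j 0.
  by rewrite (bigD1 i iA) /= gram_diag col_norm.
have tail_le : `|\sum_(j | j \notin A) Gram i j * res j| <= n%:R * nv * (nE * Mx).
  apply: le_trans (offdiag_row_le _) _ => [j|]; first by apply: contraNneq => ->.
  by apply: ler_wpM2l; [rewrite mulr_ge0 | exact: res_tail_le].
have dual_le : `|\sum_(j in A | j != i) Gram i j * d1 j 0| <= n%:R * nv * (nA * cgap).
  apply: le_trans (offdiag_row_le _) _ => [j /andP [] //|].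
  apply: ler_wpM2l; first by rewrite mulr_ge0.
  apply: le_trans (sum_restrict_le (fun j => j \in A) (fun j => j != i) _ _) _ => //.
  by rewrite (eq_bigr (fun _ => cgap)) ?sumr_const ?mulr_natl // => j /dual_active.
have -> : \sum_(j in A) Gram i j * (res j - d1 j 0) =
    - (\sum_(j | j \notin A) Gram i j * res j + gnoise i 0
       + \sum_(j in A | j != i) Gram i j * d1 j 0).
  rewrite (eq_bigr (fun j => Gram i j * res j - Gram i j * d1 j 0)) ?sumrB;
    last by move=> j _; rewrite mulrBr.
  rewrite hd1; lra.
have := noise i; rewrite normrN.
have := ler_normD (\sum_(j | j \notin A) Gram i j * res j) (gnoise i 0).
have := ler_normD (\sum_(j | j \notin A) Gram i j * res j + gnoise i 0)
  (\sum_(j in A | j != i) Gram i j * d1 j 0).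
lra.
Qed.

Lemma active_error_le {i} : i \in A -> `|res i - d1 i 0| * (1 - nA * nv) <= Werr.
Proof.
move=> iA; have hN : 0 < n%:R :> R by rewrite ltr0n.
have hK : 0 <= n%:R - nA * (n%:R * nv).
  by rewrite mulrCA -[X in X - _]mulr1 -mulrBr mulr_ge0 ?ltW ?detected_budget.
have := @diag_dominant_bound _ _ A (fun i j => Gram i j) _ _ hN
  (mulr_ge0 (ltW hN) nv_ge0) (fun i _ => etrans (gram_diag X i) (col_norm i)) gram_off
  (fun j => res j - d1 j 0) _ hK (fun i iA => active_system_le iA) i iA.
have -> : `|res i - d1 i 0| * (n%:R - nA * (n%:R * nv))
        = n%:R * (`|res i - d1 i 0| * (1 - nA * nv)) by ring.
by rewrite ler_pM2l.
Qed.

Lemma active_res_sum_le :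
  (1 - nA * nv) * \sum_(l in A) `|res l| <= nA * (Werr + (1 - nA * nv) * cgap).
Proof.
rewrite mulr_sumr.
apply: (@le_trans _ _ (\sum_(l in A) (Werr + (1 - nA * nv) * cgap))).
  apply: ler_sum => l lA.
  have hl : `|res l| <= `|res l - d1 l 0| + cgap.
    rewrite -(dual_active lA).
    by have := ler_normD (res l - d1 l 0) (d1 l 0); rewrite subrK.
  have := ler_wpM2l (ltW detected_budget) hl; have := active_error_le lA.
  lra.
by rewrite sumr_const [X in _ <= X]mulr_natl.
Qed.

(* Off A: d^{k+1}_j - beta^dagger_j is an off-diagonal combination of the
   residual plus noise, again of size at most Werr / (1 - |A| nu). *)
Lemma inactive_error_le {j} : j \notin A -> `|d1 j 0 - res j| * (1 - nA * nv) <= Werr.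
Proof.
move=> jA; have hN : 0 < n%:R :> R by rewrite ltr0n.
pose Z := \sum_(l in A) `|res l|.
have hres := residual_eq j.
rewrite (bigD1 j) //= (bigID (mem A)) /= gram_diag col_norm in hres.
have off_le (P : pred 'I_p) (s : R) : \sum_(l | P l) `|res l| <= s ->
    `|\sum_(l | (l != j) && P l) Gram j l * res l| <= n%:R * nv * s.
  move=> hs; apply: le_trans (offdiag_row_le _) _ => [l /andP [] //|].
  apply: ler_wpM2l; first by rewrite mulr_ge0 ?ler0n.
  apply: le_trans hs; rewrite (eq_bigl (fun l => P l && (l != j))) ?sum_restrict_le //.
  by move=> l; rewrite andbC.
have onA := off_le (mem A) Z (lexx _).
have offA := off_le (predC (mem A)) _ res_tail_le.
have hdiff : n%:R * `|d1 j 0 - res j| <= n%:R * (nv * Z + nv * (nE * Mx) + lu).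
  have -> : n%:R * `|d1 j 0 - res j| = `|n%:R * (d1 j 0 - res j)|.
    by rewrite normrM gtr0_norm.
  have -> : n%:R * (d1 j 0 - res j) =
      \sum_(l | (l != j) && (l \in A)) Gram j l * res l
      + \sum_(l | (l != j) && (l \notin A)) Gram j l * res l + gnoise j 0 by lra.
  have := noise j.
  have := ler_normD (\sum_(l | (l != j) && (l \in A)) Gram j l * res l)
    (\sum_(l | (l != j) && (l \notin A)) Gram j l * res l).
  have := ler_normD (\sum_(l | (l != j) && (l \in A)) Gram j l * res l
    + \sum_(l | (l != j) && (l \notin A)) Gram j l * res l) (gnoise j 0).
  lra.
rewrite ler_pM2l // in hdiff.
have := ler_wpM2l (ltW detected_budget) hdiff.
have := ler_wpM2l nv_ge0 active_res_sum_le; rewrite -/Z.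
lra.
Qed.

Lemma error_bound j :
  `|b1 j 0 + d1 j 0 - bdag j 0| * (1 - nA * nv) <= Werr.
Proof.
case: (boolP (j \in A)) => jA.
  have -> : b1 j 0 + d1 j 0 - bdag j 0 = - (res j - d1 j 0) by ring.
  by rewrite normrN; exact: active_error_le.
have -> : b1 j 0 + d1 j 0 - bdag j 0 = d1 j 0 - res j.
  by case: step => b1_off _ _ _; rewrite (b1_off j jA); ring.
exact: inactive_error_le.
Qed.

Lemma noise_small : 30 * lu < lam.
Proof. by move: lamb_lt; rewrite lamb_def; lra. Qed.

Lemma no_false_discovery j : bdag j 0 = 0 -> Mx <= 13 / 5 * lam ->
  j \notin active lam b1 d1.
Proof.
move=> hzero hMx; rewrite inE -leNgt.
have herr := error_bound j; rewrite hzero subr0 lamb_def in herr.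
have hsmall := noise_small.
have hE : nE * nv * Mx <= nE * nv * (13 / 5 * lam).
  by apply: ler_wpM2l hMx; rewrite mulr_ge0.
have hE' : nE * nv * lam <= (1 / 4 - nA * nv) * lam.
  by apply: ler_wpM2r; [exact: ltW | have := budget_split; lra].
have hAlu : 0 <= nA * nv * lu by rewrite !mulr_ge0.
have hAlam : 0 <= nA * nv * lam by rewrite !mulr_ge0 // ltW.
rewrite -(ler_pM2r detected_budget).
move: herr hE hE' hAlu hAlam hsmall lam_gt0; lra.
Qed.

Lemma keeps_large_signal j : Mx <= `|bdag j 0| -> 8 / 5 * lam <= `|bdag j 0| ->
  j \in active lam b1 d1.
Proof.
move=> hMx hbig; rewrite inE.
set B := `|bdag j 0| in hMx hbig *.
have herr := error_bound j; rewrite lamb_def in herr.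
have htri : B <= `|b1 j 0 + d1 j 0| + `|b1 j 0 + d1 j 0 - bdag j 0|.
  by have := ler_normB (b1 j 0 + d1 j 0) (b1 j 0 + d1 j 0 - bdag j 0);
    rewrite opprB addrC subrK.
have htri' := ler_wpM2r (ltW detected_budget) htri; have hsmall := noise_small.
have hE : nE * nv * Mx <= nE * nv * B by apply: ler_wpM2l hMx; rewrite mulr_ge0.
have hE' : nE * nv * B <= (1 / 4 - nA * nv) * B.
  by apply: ler_wpM2r; [exact: normr_ge0 | have := budget_split; lra].
have hAlu : 0 <= nA * nv * lu by rewrite !mulr_ge0.
have hAlam : 0 <= nA * nv * lam by rewrite !mulr_ge0 // ltW.
rewrite -(ltr_pM2r detected_budget).
move: herr htri' hE hE' hAlu hAlam hsmall hbig lam_gt0; lra.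
Qed.

Lemma active_set_invariant tau : 8 / 5 <= tau -> tau <= 13 / 5 ->
  S_set bdag lam tau \subset A ->
  S_set bdag lam tau \subset active lam b1 d1 /\ active lam b1 d1 \subset Sdag.
Proof.
move=> tau_lo tau_hi hSA.
have hlo : 8 / 5 * lam <= lam * tau by rewrite [X in X <= _]mulrC ler_pM2l.
have hhi : lam * tau <= 13 / 5 * lam by rewrite [X in _ <= X]mulrC ler_pM2l.
have hMx : Mx <= lam * tau.
  apply: bigmax_le => [|i]; first by have := hlo; have := lam_gt0; lra.
  rewrite in_setD => /andP [iA _].
  have : i \notin S_set bdag lam tau by apply: contra iA; exact: (subsetP hSA).
  by rewrite inE -ltNge => /ltW.
split; apply/subsetP => i.
  rewrite inE => hi; apply: keeps_large_signal; exact: le_trans hi.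
apply: contraTT; rewrite inE negbK => /eqP hzero.
by apply: no_false_discovery => //; exact: le_trans hhi.
Qed.

Lemma missed_max_decreases : ~~ (S_set bdag lam kappa \subset A) ->
  maxabs bdag (Sdag :\: active lam b1 d1) < Mx.
Proof.
move=> /subsetPn [i hi iA]; rewrite inE /kappa in hi.
have hpos : 0 < lam * (8 / 5) by move: lam_gt0; lra.
have iE : i \in E.
  rewrite in_setD iA inE; apply: contraTneq hi => ->.
  by rewrite normr0 -ltNge.
have hMx : 8 / 5 * lam <= Mx.
  by rewrite mulrC; exact: le_trans hi (le_bigmax_cond _ _ iE).
apply: bigmax_lt => [|j]; first lra.
rewrite in_setD => /andP [jA1 _]; rewrite ltNge; apply: contra jA1 => hj.
by apply: keeps_large_signal => //; exact: le_trans hj.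
Qed.

End OneStep.

Theorem mainTheorem11 (n p : nat) (X : 'M[R]_(n, p)) (bdag : 'cV[R]_p)
    (eta y : 'cV[R]_n) (sigma lam : R) (b0 d0 b1 d1 : 'cV[R]_p) :
  (0 < n)%N ->
  0 < sigma ->
  (forall j : 'I_p, \sum_(i < n) X i j ^+ 2 = n%:R) ->
  y = X *m bdag + eta ->
  (* (A1) T * nu <= 1/4 *)
  #|supp bdag|%:R * nu X <= 1 / 4 ->
  (* event E : ||X^T eta||_oo / n <= lambda_u *)
  (forall j : 'I_p, `|(X^T *m eta) j 0| / n%:R <= lam_u sigma n p) ->
  0 < lam ->
  lam_bar lam sigma n p < lam ->
  sna_step X y lam (lam_bar lam sigma n p) b0 d0 b1 d1 ->
  (forall tau : R, tau = kappa \/ tau = kappa + 1 ->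
     S_set bdag lam tau \subset active lam b0 d0 ->
     active lam b0 d0 \subset supp bdag ->
     S_set bdag lam tau \subset active lam b1 d1 /\
     active lam b1 d1 \subset supp bdag) /\
  (S_set bdag lam (kappa + 1) \subset active lam b0 d0 ->
   active lam b0 d0 \subset supp bdag ->
   ~~ (S_set bdag lam kappa \subset active lam b0 d0) ->
   maxabs bdag (supp bdag :\: active lam b1 d1) <
     maxabs bdag (supp bdag :\: active lam b0 d0)).
Proof.
move=> n_gt0 sigma_gt0 col_norm model sparse event lam_gt0 lamb_lt step.
have noise j : `|(X^T *m eta) j 0| <= n%:R * lam_u sigma n p.
  by rewrite -ler_pdivrMl ?ltr0n // mulrC; exact: event.
have lu_ge0 := lam_u_ge0 n p (ltW sigma_gt0).
have gram_off := nu_offdiag X n_gt0.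
have lamb_def : lam_bar lam sigma n p = 9 / 10 * lam + 3 * lam_u sigma n p by [].
split => [tau htau hSA hAS | _ hAS hmiss].
  have [tau_lo tau_hi] : 8 / 5 <= tau /\ tau <= 13 / 5.
    by case: htau => ->; rewrite /kappa; split; lra.
  exact: (active_set_invariant n_gt0 col_norm model gram_off (nu_ge0 X) sparse noise
    lu_ge0 lam_gt0 lamb_def lamb_lt step hAS tau tau_lo tau_hi hSA).
exact: (missed_max_decreases n_gt0 col_norm model gram_off (nu_ge0 X) sparse noise
  lu_ge0 lam_gt0 lamb_def lamb_lt step hAS hmiss).
Qed.
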